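(* Let $\theta:\mathbb{R}\to(0,\infty)$ be a periodic function and $\alpha>0$. Then the following statements are equivalent. (i) $\theta(y+\delta)\le e^{\alpha\delta}\theta(y)$ for all $y>0$ and $\delta>0$. (ii) $\theta(y+\delta)\le e^{\alpha\delta}\theta(y)$ for all $y\in\mathbb{R}$ and $\delta\ge0$. (iii) $\theta(y-\delta)\ge e^{-\alpha\delta}\theta(y)$ for all $y\in\mathbb{R}$ and $\delta\ge0$. (iv) The mapping $t\mapsto t^{-\alpha}\theta(\log t)$ is non-increasing for $t>0$. If $\theta$ is additionally differentiable, then each of (i)–(iv) is equivalent to (v) $\theta'(y)\le\alpha\,\theta(y)$ for all $y\in\mathbb{R}$. *)

From Stdlib Require Import Reals.
From Coquelicot Require Import Coquelicot.
Open Scope R_scope.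

Definition periodic (theta : R -> R) : Prop :=
  exists T : R, 0 < T /\ forall x : R, theta (x + T) = theta x.

Definition cond_i (theta : R -> R) (alpha : R) : Prop :=
  forall y delta : R, 0 < y -> 0 < delta -> theta (y + delta) <= exp (alpha * delta) * theta y.

Definition cond_ii (theta : R -> R) (alpha : R) : Prop :=
  forall y delta : R, 0 <= delta -> theta (y + delta) <= exp (alpha * delta) * theta y.

Definition cond_iii (theta : R -> R) (alpha : R) : Prop :=
  forall y delta : R, 0 <= delta -> theta (y - delta) >= exp (- alpha * delta) * theta y.

Definition cond_iv (theta : R -> R) (alpha : R) : Prop :=
  forall s t : R, 0 < s -> s <= t ->
    Rpower t (- alpha) * theta (ln t) <= Rpower s (- alpha) * theta (ln s).

(* Condition (v), meaningful when theta is differentiable everywhere. *)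
Definition cond_v (theta : R -> R) (alpha : R) : Prop :=
  forall y : R, Derive theta y <= alpha * theta y.

(* Everything reduces to the monotonicity of g(y) = e^(-alpha y) theta(y):
   (ii) says that g is non-increasing, (iii) is (ii) read from the right end
   of the interval, (iv) is g composed with log, and (v) says g' <= 0.
   Condition (i) only constrains y > 0, but shifting by a multiple of the
   period moves any y into (0, oo) without changing theta. *)

From Stdlib Require Import Reals Lra.
From Coquelicot Require Import Coquelicot.
Open Scope R_scope.

Definition damped (theta : R -> R) (alpha : R) (y : R) : R :=
  exp (- alpha * y) * theta y.

Lemma cond_ii_iff_damped_decreasing (theta : R -> R) (alpha : R) :
  cond_ii theta alpha <-> decreasing (damped theta alpha).
Proof.
  unfold cond_ii, decreasing, damped; split.
  - intros H x y Hxy.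
    assert (Hxy' := H x (y - x) ltac:(lra)).
    replace (x + (y - x)) with y in Hxy' by ring.
    replace (exp (- alpha * x)) with (exp (- alpha * y) * exp (alpha * (y - x)))
      by (rewrite <- exp_plus; f_equal; ring).
    rewrite Rmult_assoc.
    apply Rmult_le_compat_l; [left; apply exp_pos | exact Hxy'].
  - intros H y d Hd.
    assert (Hyd := H y (y + d) ltac:(lra)).
    apply (Rmult_le_reg_l (exp (- alpha * (y + d)))); [apply exp_pos |].
    replace (exp (- alpha * (y + d)) * (exp (alpha * d) * theta y))
      with (exp (- alpha * y) * theta y)
      by (rewrite <- Rmult_assoc, <- exp_plus; f_equal; f_equal; ring).
    exact Hyd.
Qed.

Lemma cond_ii_iff_cond_iii (theta : R -> R) (alpha : R) :
  cond_ii theta alpha <-> cond_iii theta alpha.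
Proof.
  assert (exp_cancel : forall a b c, a + b = 0 -> exp a * (exp b * c) = c).
  { intros a b c Hab. rewrite <- Rmult_assoc, <- exp_plus, Hab, exp_0. ring. }
  unfold cond_ii, cond_iii; split.
  - intros H y d Hd.
    assert (Hyd := H (y - d) d Hd).
    replace (y - d + d) with y in Hyd by ring.
    apply Rle_ge, (Rmult_le_reg_l (exp (alpha * d))); [apply exp_pos |].
    rewrite exp_cancel by ring. exact Hyd.
  - intros H y d Hd.
    assert (Hyd := Rge_le _ _ (H (y + d) d Hd)).
    replace (y + d - d) with y in Hyd by ring.
    apply (Rmult_le_reg_l (exp (- alpha * d))); [apply exp_pos |].
    rewrite exp_cancel by ring. exact Hyd.
Qed.

Lemma cond_iv_iff_damped_decreasing (theta : R -> R) (alpha : R) :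
  cond_iv theta alpha <-> decreasing (damped theta alpha).
Proof.
  unfold cond_iv, decreasing, damped, Rpower; split.
  - intros H x y Hxy.
    assert (Hexp := H (exp x) (exp y) (exp_pos x)).
    rewrite !ln_exp in Hexp.
    apply Hexp.
    destruct Hxy as [Hlt | ->]; [left; apply exp_increasing, Hlt | right; reflexivity].
  - intros H s t Hs Hst.
    apply H.
    destruct Hst as [Hlt | ->]; [left; apply ln_increasing; lra | right; reflexivity].
Qed.

Lemma periodic_shift_nat (f : R -> R) (T : R) (HT : forall x, f (x + T) = f x) :
  forall (n : nat) (x : R), f (x + INR n * T) = f x.
Proof.
  induction n as [| n IH]; intro x.
  - simpl. f_equal. ring.
  - rewrite S_INR.
    replace (x + (INR n + 1) * T) with (x + INR n * T + T) by ring.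
    rewrite HT. apply IH.
Qed.

Lemma shift_nat_pos (T y : R) : 0 < T -> exists n : nat, 0 < y + INR n * T.
Proof.
  intros HT.
  destruct (INR_unbounded (- y / T)) as [n Hn].
  exists n.
  apply (Rmult_gt_compat_r T) in Hn; [| exact HT].
  unfold Rdiv in Hn. rewrite Rmult_assoc, Rinv_l, Rmult_1_r in Hn; lra.
Qed.

Lemma cond_i_iff_cond_ii (theta : R -> R) (alpha : R) :
  periodic theta -> (cond_i theta alpha <-> cond_ii theta alpha).
Proof.
  intros [T [HT Hper]]. unfold cond_i, cond_ii; split.
  - intros H y d [Hd | <-].
    2: { rewrite Rmult_0_r, exp_0, Rplus_0_r. lra. }
    destruct (shift_nat_pos T y HT) as [n Hn].
    assert (Hshift := H _ _ Hn Hd).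
    replace (y + INR n * T + d) with (y + d + INR n * T) in Hshift by ring.
    rewrite !(periodic_shift_nat theta T Hper) in Hshift.
    exact Hshift.
  - intros H y d _ Hd. apply H. lra.
Qed.

Lemma decreasing_iff_Derive_nonpos (f : R -> R) :
  (forall x, ex_derive f x) -> decreasing f <-> forall x, Derive f x <= 0.
Proof.
  intros Hf.
  set (pr := fun x => ex_derive_Reals_0 f x (Hf x)).
  assert (HD : forall x, derive_pt f x (pr x) = Derive f x)
    by (intro x; apply Derive_Reals).
  split.
  - intros Hdec x. rewrite <- HD. exact (nonpos_derivative_0 f pr Hdec x).
  - intros Hneg. apply (nonpos_derivative_1 f pr). intro x. rewrite HD. apply Hneg.
Qed.

Section Differentiable.

Variables (theta : R -> R) (alpha : R).
Hypothesis theta_derivable : forall y, ex_derive theta y.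

Let exp_scaled_derive (y : R) :
  is_derive (fun x => exp (- alpha * x)) y (- alpha * exp (- alpha * y)).
Proof. auto_derive; [auto | ring]. Qed.

Lemma ex_derive_damped (y : R) : ex_derive (damped theta alpha) y.
Proof.
  apply ex_derive_mult; [eexists; apply exp_scaled_derive | apply theta_derivable].
Qed.

Lemma Derive_damped (y : R) :
  Derive (damped theta alpha) y
  = exp (- alpha * y) * (Derive theta y - alpha * theta y).
Proof.
  unfold damped.
  rewrite Derive_mult; [| eexists; apply exp_scaled_derive | apply theta_derivable].
  replace (Derive (fun x => exp (- alpha * x)) y) with (- alpha * exp (- alpha * y))
    by (symmetry; apply is_derive_unique, exp_scaled_derive).
  ring.
Qed.

Lemma cond_v_iff_damped_decreasing :
  cond_v theta alpha <-> decreasing (damped theta alpha).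
Proof.
  rewrite (decreasing_iff_Derive_nonpos _ ex_derive_damped).
  unfold cond_v.
  split; intros H y; specialize (H y); rewrite ?Derive_damped in *;
    pose proof (exp_pos (- alpha * y)); nra.
Qed.

End Differentiable.

Theorem lemmaA1 (theta : R -> R) (alpha : R)
  (Hpos : forall x : R, 0 < theta x) (Hper : periodic theta) (Halpha : 0 < alpha) :
  (cond_i theta alpha <-> cond_ii theta alpha) /\
  (cond_ii theta alpha <-> cond_iii theta alpha) /\
  (cond_iii theta alpha <-> cond_iv theta alpha) /\
  ((forall y : R, ex_derive theta y) -> (cond_i theta alpha <-> cond_v theta alpha)).
Proof.
  pose proof (cond_i_iff_cond_ii theta alpha Hper).
  pose proof (cond_ii_iff_damped_decreasing theta alpha).
  pose proof (cond_ii_iff_cond_iii theta alpha).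
  pose proof (cond_iv_iff_damped_decreasing theta alpha).
  split; [tauto |]. split; [tauto |]. split; [tauto |].
  intros Hderivable.
  pose proof (cond_v_iff_damped_decreasing theta alpha Hderivable).
  tauto.
Qed.
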